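(* Suppose $\|\cdot\| = \|\cdot\|_2$ and $\omega(x) = \|x\|_2^2/2$, and that $F$ is Lipschitz continuous: $\|F(x) - F(y)\|_2 \le L\|x-y\|_2$ for all $x,y \in X$. If, for some $x \in X$ and $\gamma > 0$, $\|R_\gamma(x)\| \le \epsilon$, then the point $x^+ := P_x(\gamma F(x)) = \Pi_X(x - \gamma F(x))$ is an $((L\gamma + 1)\epsilon, 0)$-strong solution of $\mathrm{VI}(X,F)$. In particular, if $\gamma \le 1/L$, then $x^+$ is a $(2\epsilon, 0)$-strong solution of $\mathrm{VI}(X,F)$.
   Context: $X \subseteq \mathbb{R}^n$ is a nonempty closed convex set, $F: X\to\mathbb{R}^n$ is continuous, and $\Pi_X$ is the Euclidean projection onto $X$. With $\omega(x) = \|x\|_2^2/2$, the prox-mapping is $P_x(\phi) = \arg\min_{z\in X}\{\langle\phi,z\rangle + \tfrac12\|z-x\|_2^2\} = \Pi_X(x-\phi)$, and the residual is $R_\gamma(x) = \frac{1}{\gamma}[x - \Pi_X(x - \gamma F(x))]$. For $\phi \in \mathbb{R}^n$, $\tilde g(x,\phi) = \sup_{z \in X}\langle F(x) + \phi, x - z\rangle$. A point $x\in X$ is an $(\epsilon,\delta)$-strong solution of $\mathrm{VI}(X,F)$ if there exists $\phi$ with $\|\phi\|_2 \le \epsilon$ and $\tilde g(x,\phi) \le \delta$. *)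

From HB Require Import structures.
From mathcomp Require Import all_boot all_order all_algebra.
From mathcomp Require Import all_classical all_reals all_analysis.
Set Implicit Arguments. Unset Strict Implicit. Unset Printing Implicit Defensive.
Import Order.TTheory GRing.Theory Num.Theory.
Import numFieldNormedType.Exports.
Local Open Scope classical_set_scope.
Local Open Scope ring_scope.

Section Defs.
Variables (R : realType) (n : nat).
Notation V := 'rV[R]_n.

Definition dotp (u v : V) : R := \sum_(i < n) u ord0 i * v ord0 i.
Definition norm2 (u : V) : R := Num.sqrt (dotp u u).

Definition is_euclid_proj (X : set V) (P : V -> V) : Prop :=
  forall y, X (P y) /\ (forall z, X z -> norm2 (y - P y) <= norm2 (y - z)).

Definition residual (P : V -> V) (F : V -> V) (gamma : R) (x : V) : V :=
  gamma^-1 *: (x - P (x - gamma *: F x)).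

Definition gtilde (X : set V) (F : V -> V) (x phi : V) : \bar R :=
  ereal_sup [set (dotp (F x + phi) (x - z))%:E | z in X].

Definition strong_solution (X : set V) (F : V -> V) (eps delta : R) (x : V) : Prop :=
  X x /\ exists phi : V, norm2 phi <= eps /\ (gtilde X F x phi <= delta%:E)%E.

End Defs.

(* Write p := Π_X(x - γ F x) and r := R_γ(x), so that x - p = γ r.  The
   variational characterisation of the projection, <x - γ F x - p, z - p> <= 0
   for z in X, says exactly that <F x - r, p - z> <= 0, i.e. that p solves the
   VI perturbed by φ := F x - F p - r.  By the Lipschitz bound,
   |φ| <= L |x - p| + |r| = (L γ + 1) |r|. *)
From HB Require Import structures.
From mathcomp Require Import all_boot all_order all_algebra.
From mathcomp Require Import all_classical all_reals all_analysis.
From mathcomp Require Import lra.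
Import Order.TTheory GRing.Theory Num.Theory.
Import numFieldNormedType.Exports.
Local Open Scope classical_set_scope.
Local Open Scope ring_scope.

Lemma le0_of_forall_small_gt0 (R : realFieldType) (c D : R) : 0 <= D ->
  (forall t, 0 < t <= 1 -> 2 * c <= t * D) -> c <= 0.
Proof.
move=> D0 small; rewrite leNgt; apply/negP => c0.
have cD0 : 0 < c + D by lra.
pose t := c / (c + D).
have tcD : t * (c + D) = c by rewrite mulfVK ?gt_eqF.
have /small : 0 < t <= 1 by rewrite divr_gt0 // ler_pdivrMr // mul1r; lra.
by rewrite -(ler_pM2r cD0) [in X in _ <= X]mulrAC tcD; nra.
Qed.

Section EuclideanGeometry.
Context {R : realType} {n : nat}.
Implicit Types (u v w : 'rV[R]_n) (c : R).

Lemma dotpC u v : dotp u v = dotp v u.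
Proof. by apply: eq_bigr => i _; rewrite mulrC. Qed.

Lemma dotpDl u v w : dotp (u + v) w = dotp u w + dotp v w.
Proof. by rewrite /dotp -big_split; apply: eq_bigr => i _; rewrite !mxE mulrDl. Qed.

Lemma dotpZl c u w : dotp (c *: u) w = c * dotp u w.
Proof. by rewrite /dotp mulr_sumr; apply: eq_bigr => i _; rewrite !mxE mulrA. Qed.

Lemma dotpNl u w : dotp (- u) w = - dotp u w.
Proof. by rewrite -scaleN1r dotpZl mulN1r. Qed.

Lemma dotpBl u v w : dotp (u - v) w = dotp u w - dotp v w.
Proof. by rewrite dotpDl dotpNl. Qed.

Lemma dotpDr u v w : dotp w (u + v) = dotp w u + dotp w v.
Proof. by rewrite dotpC dotpDl !(dotpC w). Qed.

Lemma dotpZr c u w : dotp w (c *: u) = c * dotp w u.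
Proof. by rewrite dotpC dotpZl dotpC. Qed.

Lemma dotpNr u w : dotp w (- u) = - dotp w u.
Proof. by rewrite dotpC dotpNl dotpC. Qed.

Lemma dotpBr u v w : dotp w (u - v) = dotp w u - dotp w v.
Proof. by rewrite dotpDr dotpNr. Qed.

Lemma dotpp_ge0 u : 0 <= dotp u u.
Proof. by apply: sumr_ge0 => i _; rewrite -expr2 sqr_ge0. Qed.

Lemma norm2_ge0 u : 0 <= norm2 u.
Proof. exact: sqrtr_ge0. Qed.

Lemma sqr_norm2 u : norm2 u ^+ 2 = dotp u u.
Proof. by rewrite /norm2 sqr_sqrtr // dotpp_ge0. Qed.

Lemma ler_norm2 u v : (norm2 u <= norm2 v) = (dotp u u <= dotp v v).
Proof. by rewrite /norm2 ler_sqrt // dotpp_ge0. Qed.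

Lemma dotp_norm2_eq0 u w : norm2 u = 0 -> dotp u w = 0.
Proof.
move=> u0; have : dotp u u = 0 by rewrite -sqr_norm2 u0 expr0n.
move/psumr_eq0P => uu0; rewrite /dotp big1 // => i _.
have /eqP : u ord0 i * u ord0 i = 0 by apply: uu0 => // j _; rewrite -expr2 sqr_ge0.
by rewrite mulf_eq0 orbb => /eqP ->; rewrite mul0r.
Qed.

Lemma dotp_le_norm2 u v : dotp u v <= norm2 u * norm2 v.
Proof.
set a := norm2 u; set b := norm2 v; have a0 := norm2_ge0 u; have b0 := norm2_ge0 v.
have [ab0|ab_neq0] := eqVneq (a * b) 0.
  move/eqP: ab0; rewrite mulf_eq0 => /orP[]/eqP/dotp_norm2_eq0 uv0.
    by rewrite uv0 mulr_ge0.
  by rewrite dotpC uv0 mulr_ge0.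
have ab_gt0 : 0 < a * b by rewrite lt_def ab_neq0 mulr_ge0.
(* 0 <= |b u - a v|^2 = 2 a b (a b - <u, v>) *)
have := dotpp_ge0 (b *: u - a *: v).
rewrite !(dotpBl, dotpBr, dotpZl, dotpZr) -!sqr_norm2 -/a -/b (dotpC v u).
move=> h; rewrite -subr_ge0 -(pmulr_rge0 _ ab_gt0); nra.
Qed.

Lemma norm2D u v : norm2 (u + v) <= norm2 u + norm2 v.
Proof.
rewrite -(ler_pXn2r (_ : 0 < 2)%N) ?nnegrE ?addr_ge0 ?norm2_ge0 //.
rewrite sqr_norm2 !(dotpDl, dotpDr) (dotpC v u) sqrrD -!sqr_norm2.
have := dotp_le_norm2 u v; lra.
Qed.

Lemma norm2Z c u : norm2 (c *: u) = `|c| * norm2 u.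
Proof. by rewrite /norm2 dotpZl dotpZr mulrA -expr2 sqrtrM ?sqr_ge0 // sqrtr_sqr. Qed.

Lemma norm2N u : norm2 (- u) = norm2 u.
Proof. by rewrite -scaleN1r norm2Z normrN normr1 mul1r. Qed.

Lemma euclid_proj_variational {X : set 'rV[R]_n} {P : 'rV[R]_n -> 'rV[R]_n}
    (y z : 'rV[R]_n) :
  convex_set X -> is_euclid_proj X P -> X z -> dotp (y - P y) (z - P y) <= 0.
Proof.
move=> convX projP Xz; have [XPy Py_min] := projP y.
apply: (@le0_of_forall_small_gt0 R _ _ (dotpp_ge0 (z - P y))) => t /andP[t_gt0 t_le1].
have Xq : X (P y + t *: (z - P y)).
  have := convX z (P y) (Itv01 (ltW t_gt0) t_le1) (mem_set Xz) (mem_set XPy).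
  move/set_mem; congr X; rewrite scalerBr addrC.
  change (t *: z + (1 - t) *: P y = t *: z - t *: P y + P y).
  by rewrite scalerBl scale1r addrA addrAC.
have := Py_min _ Xq; rewrite opprD addrA ler_norm2.
move: (y - P y) (z - P y) => w d.
rewrite !(dotpBl, dotpBr, dotpZl, dotpZr) (dotpC d w) => h.
by rewrite -(ler_pM2l t_gt0); nra.
Qed.

Lemma gtilde_le0 (X : set 'rV[R]_n) (F : 'rV[R]_n -> 'rV[R]_n) (x phi : 'rV[R]_n) :
  (forall z, X z -> dotp (F x + phi) (x - z) <= 0) -> (gtilde X F x phi <= 0%:E)%E.
Proof. by move=> h; apply: ge_ereal_sup => _ [z Xz <-]; rewrite lee_fin h. Qed.

Lemma strong_solution_le (X : set 'rV[R]_n)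
    (F : 'rV[R]_n -> 'rV[R]_n) (eps eps' delta : R) (x : 'rV[R]_n) :
  eps <= eps' -> strong_solution X F eps delta x -> strong_solution X F eps' delta x.
Proof.
move=> le_eps [Xx [phi [phi_le g_le]]]; split=> //.
by exists phi; split=> //; apply: le_trans le_eps.
Qed.

Lemma euclid_proj_step_strong_solution {X : set 'rV[R]_n}
    {F P : 'rV[R]_n -> 'rV[R]_n} {L gamma : R} {x : 'rV[R]_n} :
  convex_set X -> is_euclid_proj X P -> 0 <= L ->
  (forall y z, X y -> X z -> norm2 (F y - F z) <= L * norm2 (y - z)) ->
  X x -> 0 < gamma ->
  strong_solution X F ((L * gamma + 1) * norm2 (residual P F gamma x)) 0
    (P (x - gamma *: F x)).
Proof.
move=> convX projP L0 lipF Xx gamma_gt0.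
set p := P _; set r := residual P F gamma x.
have Xp : X p := (projP _).1.
have x_p : x - p = gamma *: r by rewrite scalerA mulfV ?gt_eqF // scale1r.
split=> //; exists (F x - F p - r); split.
  apply: le_trans (norm2D _ _) _; rewrite norm2N.
  have := lipF x p Xx Xp; rewrite x_p norm2Z gtr0_norm //.
  have := norm2_ge0 r; have := mulr_ge0 L0 (ltW gamma_gt0); nra.
apply: gtilde_le0 => z Xz; rewrite addrC addrAC subrK.
have := euclid_proj_variational (x - gamma *: F x) z convX projP Xz.
rewrite -/p addrAC x_p -scalerBr dotpZl pmulr_rle0 //.
by rewrite -(opprB r) -(opprB z) dotpNl dotpNr opprK.
Qed.

End EuclideanGeometry.

Theorem corollary1 (R : realType) (n : nat) (X : set 'rV[R]_n)
  (F P : 'rV[R]_n -> 'rV[R]_n) (L gamma eps : R) (x : 'rV[R]_n) :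
  X !=set0 -> closed X -> convex_set X ->
  {within X, continuous F} ->
  is_euclid_proj X P ->
  0 <= L ->
  (forall y z, X y -> X z -> norm2 (F y - F z) <= L * norm2 (y - z)) ->
  X x -> 0 < gamma ->
  norm2 (residual P F gamma x) <= eps ->
  strong_solution X F ((L * gamma + 1) * eps) 0 (P (x - gamma *: F x)) /\
  (0 < L -> gamma <= L^-1 ->
   strong_solution X F (2 * eps) 0 (P (x - gamma *: F x))).
Proof.
(* Nonemptiness, closedness and continuity only guarantee that the projection
   exists, which is_euclid_proj already assumes. *)
move=> _ _ convX _ projP L0 lipF Xx gamma_gt0 res_le.
have eps0 : 0 <= eps := le_trans (norm2_ge0 _) res_le.
have sol := euclid_proj_step_strong_solution convX projP L0 lipF Xx gamma_gt0.
have solE : strong_solution X F ((L * gamma + 1) * eps) 0 (P (x - gamma *: F x)).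
  by apply: strong_solution_le sol; rewrite ler_wpM2l ?addr_ge0 ?mulr_ge0 // ltW.
split=> // L_gt0 gamma_le; apply: strong_solution_le solE.
have Lgamma_le1 : L * gamma <= 1 by rewrite -(mulfV (lt0r_neq0 L_gt0)) ler_pM2l.
by rewrite ler_wpM2r //; lra.
Qed.
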